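(* Let $(S,M)$ be a surface with marked points and empty boundary, and let $(S,M')$ be obtained by adding one more puncture, $M'=M\cup\{p\}$. (a) If $(S,M)$ has an ideal triangulation satisfying (T3), then so does $(S,M')$. (b) If $(S,M)$ has an ideal triangulation satisfying (T3$\tfrac12$), then so does $(S,M')$. (c) If $(S,M)$ has an ideal triangulation satisfying (T4), then so does $(S,M')$.
   Context: $(S,M)$: $S$ compact, connected, oriented surface without boundary, $M$ a finite non-empty set of punctures. Arcs incident to a puncture are counted with multiplicity (an arc with both endpoints at the puncture counts twice). (T3): at each puncture at least three arcs of $T$ are incident. (T3$\tfrac12$): $T$ has (T3) and every arc of $T$ has an endpoint with at least four incident arcs. (T4): at each puncture at least four arcs of $T$ are incident. *)

From mathcomp Require Import all_boot.
Set Implicit Arguments. Unset Strict Implicit. Unset Printing Implicit Defensive.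

(* An ideal triangulation is a finite set of [nt] oriented ideal triangles;
   side (t,k) of triangle t runs from its corner k to its corner k+1 (mod 3).
   [glue] is a fixed-point-free involution on sides, gluing side s to side
   [glue s] with orientation reversed.  Self-folded triangles occur when a
   side is glued to another side of the same triangle. *)
Record triangulation := Triangulation {
  nt : nat;
  glue : 'I_nt * 'I_3 -> 'I_nt * 'I_3;
  glue_invol : involutive glue;
  glue_nofix : forall s, glue s != s }.

Section Tri.
Variable T : triangulation.
Definition side := ('I_(nt T) * 'I_3)%type.

Definition nextc (s : side) : side := (s.1, ordS s.2).

(* Corner (t,k) is identified with side (t,k) (the side starting at it).
   [rot] sends a corner to the next corner around the same puncture:
   corner k of t is glued to corner k'+1 of t' where (t',k') = glue (t,k). *)
Definition rot (c : side) : side := nextc (@glue T c).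

(* punctures = cycles of rot; arcs = pairs {s, glue s} *)
Definition nverts := fcard rot predT.
Definition nedges := fcard (@glue T) predT.

(* number of arc-ends (with multiplicity) at the puncture of corner c *)
Definition deg (c : side) := order rot c.

Definition tri_connected :=
  forall x y : side, connect (fun a b => (b == @glue T a) || (b == nextc a)) x y.

(* the glued surface has genus g: V - E + F = 2 - 2g *)
Definition tri_genus (g : nat) := nverts + nt T + 2 * g = nedges + 2.

(* the endpoints of the arc containing side s are the punctures at corners
   s and nextc s *)
Definition T3 := forall c : side, 3 <= deg c.
Definition T3half := T3 /\ forall s : side, 4 <= deg s \/ 4 <= deg (nextc s).
Definition T4 := forall c : side, 4 <= deg c.
End Tri.

(* (S,M), S closed connected oriented of genus g with |M| = n punctures,
   admits an ideal triangulation satisfying P *)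
Definition has_triangulation (g n : nat) (P : triangulation -> Prop) :=
  exists T : triangulation,
    [/\ tri_connected T, tri_genus T g, nverts T = n & P T].

(* Pick a side a0 and its partner a1, which lie in different triangles by
   (T3).  Adding two triangles N0, N1 and regluing around the arc {a0, a1}
   creates one new puncture whose four corners form a single rotation cycle,
   so it has degree 4.  Collapsing N0 and N1 back onto the triangles of a0 and
   a1 maps each rotation orbit around an old puncture onto the corresponding
   orbit of the original triangulation, every old step being replaced by one
   or two new ones; hence old degrees do not decrease and the old punctures
   correspond bijectively to the new ones other than the added puncture.  One
   puncture, two triangles and three arcs are added, so the Euler
   characteristic, hence the genus, is unchanged. *)

From Pilot Require Import Defs.
From mathcomp Require Import all_boot zify.
(* So that [rot] is [Defs.rot], not [seq.rot]. *)
Import Defs.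
Set Implicit Arguments. Unset Strict Implicit. Unset Printing Implicit Defensive.

Definition o0 : 'I_3 := ord0.
Definition o1 : 'I_3 := Ordinal (isT : 1 < 3).
Definition o2 : 'I_3 := Ordinal (isT : 2 < 3).

Lemma ordS_o0 : ordS o0 = o1. Proof. exact/val_inj. Qed.
Lemma ordS_o1 : ordS o1 = o2. Proof. exact/val_inj. Qed.
Lemma ordS_o2 : ordS o2 = o0. Proof. exact/val_inj. Qed.

Lemma ordS3_id (k : 'I_3) : ordS (ordS (ordS k)) = k.
Proof. by apply/val_inj; case: k => [[|[|[|]]] ?]. Qed.

Lemma ord3_cases (k : 'I_3) : [\/ k = o0, k = o1 | k = o2].
Proof.
case: k => [[|[|[|//]]] ?]; [constructor 1 | constructor 2 | constructor 3];
  exact/val_inj.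
Qed.

Lemma order_fixpoint (U : finType) (f : U -> U) x : f x = x -> order f x = 1.
Proof. by move=> fx; rewrite (@order_cycle _ f [:: x]) //= ?inE ?fx ?eqxx. Qed.

Section TriangulationFacts.
Variable T : triangulation.
Implicit Types s : side T.

Lemma nextc3_id s : nextc (nextc (nextc s)) = s.
Proof. by case: s => t k; rewrite /nextc /= ordS3_id. Qed.

Lemma nextc_inj : injective (@nextc T).
Proof.
move=> [t k] [t' k'] E; congr (_, _); first exact: (congr1 fst E).
exact: ordS_inj (congr1 snd E).
Qed.

Lemma nextc_neq s : nextc s != s.
Proof. by case: s => t k; rewrite /nextc xpair_eqE eqxx; case: (ord3_cases k) => ->. Qed.

Lemma glue_inj : injective (@glue T).
Proof. exact: inv_inj (@glue_invol T). Qed.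

Lemma rot_inj : injective (@rot T).
Proof. by move=> x y /nextc_inj /glue_inj. Qed.

(* Otherwise one corner of the triangle would be alone around its puncture. *)
Lemma T3_glue_other_triangle : T3 T -> forall s, (glue s).1 != s.1.
Proof.
move=> T3T [t i]; apply/negP => /eqP.
case Eg: (glue (t, i)) => [t' j] /= Et; subst t'.
have ji : j != i by apply: contraNneq (glue_nofix (t, i)) => Eji; rewrite Eg Eji.
suff [c rot_c] : exists c : side T, rot c = c.
  by move: (T3T c); rewrite /deg (order_fixpoint rot_c).
have [Ej|Ei] : j = ordS i \/ i = ordS j.
  by move: ji; case: (ord3_cases i) => ->; case: (ord3_cases j) => -> //= _;
    [left | right | right | left | left | right]; apply/val_inj.
  by exists (t, j); rewrite /rot -{1}Eg glue_invol /nextc /= Ej.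
by exists (t, i); rewrite /rot Eg /nextc /= Ei.
Qed.

Lemma twice_nedges : nedges T * 2 = nt T * 3.
Proof.
rewrite /nedges (@fcard_order_set _ _ glue_inj 2) ?card_prod ?card_ord //.
apply/subsetP => x _; rewrite inE (@order_cycle _ _ [:: x; glue x]) //=.
- by rewrite glue_invol !eqxx.
- by rewrite inE andbT eq_sym glue_nofix.
- by rewrite inE eqxx.
Qed.

Lemma nt_gt0 : 0 < nverts T -> 0 < nt T.
Proof.
move=> /leq_trans/(_ (max_card _)); rewrite card_prod card_ord.
by case: (nt T).
Qed.

End TriangulationFacts.

Section AddPuncture.
Variable T : triangulation.
Variable t0 : 'I_(nt T).
Hypothesis T3T : T3 T.
Implicit Types s : side T.

(* The new puncture is created at the two ends of the arc {a0, a1}: it takes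
   over the corners b0 and b1, the new triangles N0 and N1 are glued to a1 and
   a0 and to b0 and b1, and their sides 1 take over the old gluings of b0 and
   b1 (this is what [lift] records). *)
Definition a0 : side T := (t0, o0).
Definition b0 : side T := nextc a0.
Definition a1 : side T := glue a0.
Definition b1 : side T := nextc a1.

(* [inr (inl k)] and [inr (inr k)] are the sides of the new triangles N0, N1. *)
Definition xside := (side T + ('I_3 + 'I_3))%type.
Implicit Types y : xside.

Definition lift s : xside :=
  if s == b0 then inr (inl o1) else if s == b1 then inr (inr o1) else inl s.

Definition xglue y : xside :=
  match y with
  | inl s => if s == a0 then inr (inr o0) else if s == a1 then inr (inl o0)
             else if s == b0 then inr (inl o2) else if s == b1 then inr (inr o2)
             else lift (glue s)
  | inr (inl k) => match val k with 0 => inl a1 | 1 => lift (glue b0) | _ => inl b0 end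
  | inr (inr k) => match val k with 0 => inl a0 | 1 => lift (glue b1) | _ => inl b1 end
  end.

Definition xnextc y : xside :=
  match y with
  | inl s => inl (nextc s)
  | inr (inl k) => inr (inl (ordS k))
  | inr (inr k) => inr (inr (ordS k))
  end.

Definition xrot y := xnextc (xglue y).

Definition collapse y : side T :=
  match y with
  | inl s => s
  | inr (inl k) => iter k (@nextc T) a0
  | inr (inr k) => iter k (@nextc T) a1
  end.

Definition new_corners : seq xside := [:: inl b0; inr (inl o0); inl b1; inr (inr o0)].

Lemma neq_sides_t0_t1 s s' : s.1 = t0 -> s'.1 = a1.1 -> s != s'.
Proof.
move=> s_t0 s'_t1; apply: contraNneq (T3_glue_other_triangle T3T a0) => ss'.
by rewrite -s'_t1 -ss' s_t0.
Qed.

Lemma a0a1 : a0 != a1. Proof. exact: neq_sides_t0_t1. Qed.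
Lemma a0b1 : a0 != b1. Proof. exact: neq_sides_t0_t1. Qed.
Lemma b0a1 : b0 != a1. Proof. exact: neq_sides_t0_t1. Qed.
Lemma b0b1 : b0 != b1. Proof. exact: neq_sides_t0_t1. Qed.
Lemma a0b0 : a0 != b0. Proof. by rewrite eq_sym nextc_neq. Qed.
Lemma a1b1 : a1 != b1. Proof. by rewrite eq_sym nextc_neq. Qed.

Lemma eq_nextc_b0 s : (nextc s == b0) = (s == a0).
Proof. exact: (inj_eq (@nextc_inj T) s a0). Qed.
Lemma eq_nextc_b1 s : (nextc s == b1) = (s == a1).
Proof. exact: (inj_eq (@nextc_inj T) s a1). Qed.
Lemma glue_a1 : glue a1 = a0. Proof. exact: glue_invol. Qed.
Lemma eq_glue_a0 s : (glue s == a0) = (s == a1).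
Proof. by rewrite -glue_a1 (inj_eq (@glue_inj T)). Qed.
Lemma eq_glue_a1 s : (glue s == a1) = (s == a0).
Proof. exact: (inj_eq (@glue_inj T) s a0). Qed.

Lemma collapse_lift s : collapse (lift s) = s.
Proof. by rewrite /lift; case: eqP => [->|_] //; case: eqP => [->|_]. Qed.

Lemma lift_old s : s != b0 -> s != b1 -> lift s = inl s.
Proof. by rewrite /lift => /negbTE -> /negbTE ->. Qed.

Lemma lift_b0 : lift b0 = inr (inl o1). Proof. by rewrite /lift eqxx. Qed.
Lemma lift_b1 : lift b1 = inr (inr o1).
Proof. by rewrite /lift eq_sym (negbTE b0b1) eqxx. Qed.

Lemma xglue_old s :
  s != a0 -> s != a1 -> s != b0 -> s != b1 -> xglue (inl s) = lift (glue s).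
Proof. by rewrite /xglue => /negbTE -> /negbTE -> /negbTE -> /negbTE ->. Qed.

Lemma xglue_a0 : xglue (inl a0) = inr (inr o0). Proof. by rewrite /xglue eqxx. Qed.
Lemma xglue_a1 : xglue (inl a1) = inr (inl o0).
Proof. by rewrite /xglue eq_sym (negbTE a0a1) eqxx. Qed.
Lemma xglue_b0 : xglue (inl b0) = inr (inl o2).
Proof. by rewrite /xglue eq_sym (negbTE a0b0) (negbTE b0a1) eqxx. Qed.
Lemma xglue_b1 : xglue (inl b1) = inr (inr o2).
Proof.
by rewrite /xglue eq_sym (negbTE a0b1) eq_sym (negbTE a1b1) eq_sym (negbTE b0b1) eqxx.
Qed.

Lemma xglue_lift s : s != a0 -> s != a1 -> xglue (lift s) = lift (glue s).
Proof.
move=> s_a0 s_a1; rewrite /lift; case: eqP => [->|/eqP s_b0] //.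
by case: eqP => [->|/eqP s_b1] //; rewrite -/(lift (glue s)) xglue_old.
Qed.

Lemma xglue_N0_0 : xglue (inr (inl o0)) = inl a1. Proof. by []. Qed.
Lemma xglue_N0_1 : xglue (inr (inl o1)) = lift (glue b0). Proof. by []. Qed.
Lemma xglue_N0_2 : xglue (inr (inl o2)) = inl b0. Proof. by []. Qed.
Lemma xglue_N1_0 : xglue (inr (inr o0)) = inl a0. Proof. by []. Qed.
Lemma xglue_N1_1 : xglue (inr (inr o1)) = lift (glue b1). Proof. by []. Qed.
Lemma xglue_N1_2 : xglue (inr (inr o2)) = inl b1. Proof. by []. Qed.

Lemma glue_b0_neq : (glue b0 != a0) && (glue b0 != a1).
Proof. by rewrite eq_glue_a0 eq_glue_a1 b0a1 eq_sym a0b0. Qed.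
Lemma glue_b1_neq : (glue b1 != a0) && (glue b1 != a1).
Proof. by rewrite eq_glue_a0 eq_glue_a1 eq_sym a1b1 eq_sym a0b1. Qed.

Lemma xglue_invol : involutive xglue.
Proof.
case=> [s|[k|k]].
- have [->|s_a0] := eqVneq s a0; first by rewrite xglue_a0.
  have [->|s_a1] := eqVneq s a1; first by rewrite xglue_a1.
  have [->|s_b0] := eqVneq s b0; first by rewrite xglue_b0.
  have [->|s_b1] := eqVneq s b1; first by rewrite xglue_b1.
  by rewrite xglue_old // xglue_lift ?eq_glue_a0 ?eq_glue_a1 // glue_invol lift_old.
- case: (ord3_cases k) => ->; first by rewrite xglue_N0_0 xglue_a1.
    by case/andP: glue_b0_neq => ? ?; rewrite xglue_N0_1 xglue_lift // glue_invol lift_b0.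
  by rewrite xglue_N0_2 xglue_b0.
- case: (ord3_cases k) => ->; first by rewrite xglue_N1_0 xglue_a0.
    by case/andP: glue_b1_neq => ? ?; rewrite xglue_N1_1 xglue_lift // glue_invol lift_b1.
  by rewrite xglue_N1_2 xglue_b1.
Qed.

Lemma xglue_nofix y : xglue y != y.
Proof.
have lift_glue_neq s : lift (glue s) != lift s.
  by rewrite (can_eq collapse_lift) glue_nofix.
case: y => [s|[k|k]].
- have [->|s_a0] := eqVneq s a0; first by rewrite xglue_a0.
  have [->|s_a1] := eqVneq s a1; first by rewrite xglue_a1.
  have [->|s_b0] := eqVneq s b0; first by rewrite xglue_b0.
  have [->|s_b1] := eqVneq s b1; first by rewrite xglue_b1.
  by rewrite xglue_old // -(lift_old s_b0 s_b1).
- case: (ord3_cases k) => ->; rewrite ?xglue_N0_0 ?xglue_N0_2 //.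
  by rewrite xglue_N0_1 -lift_b0.
- case: (ord3_cases k) => ->; rewrite ?xglue_N1_0 ?xglue_N1_2 //.
  by rewrite xglue_N1_1 -lift_b1.
Qed.

Lemma xnextc3_id y : xnextc (xnextc (xnextc y)) = y.
Proof. by case: y => [s|[k|k]] /=; rewrite ?nextc3_id ?ordS3_id. Qed.

Lemma collapse_xnextc y : collapse (xnextc y) = nextc (collapse y).
Proof. by case: y => [s|[k|k]] //=; case: (ord3_cases k) => -> //=; rewrite nextc3_id. Qed.

Lemma new_corners_cycle : fcycle xrot new_corners.
Proof.
by rewrite /= /xrot xglue_b0 xglue_b1 xglue_N0_0 xglue_N1_0 /= !eqxx.
Qed.

Lemma new_corners_uniq : uniq new_corners.
Proof. by rewrite /= !inE (inj_eq inl_inj) (negbTE b0b1). Qed.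

Lemma lift_notin_new_corners s : lift s \notin new_corners.
Proof.
rewrite /lift; case: eqP => // /eqP s_b0; case: eqP => // /eqP s_b1.
by rewrite !inE !(inj_eq inl_inj) (negbTE s_b0) (negbTE s_b1).
Qed.

Lemma rot_a0 : rot a0 = b1. Proof. by []. Qed.
Lemma rot_a1 : rot a1 = b0. Proof. by rewrite /rot glue_a1. Qed.

Lemma collapse_xnextc_lift s : collapse (xnextc (lift s)) = nextc s.
Proof. by rewrite collapse_xnextc collapse_lift. Qed.

Lemma collapse_xrot y : y \notin new_corners ->
  collapse (xrot y) = collapse y \/ collapse (xrot y) = rot (collapse y).
Proof.
case: y => [s|[k|k]].
- rewrite !inE !(inj_eq inl_inj) /= orbF negb_or => /andP [s_b0 s_b1].
  have [->|s_a0] := eqVneq s a0; first by right; rewrite /xrot xglue_a0.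
  have [->|s_a1] := eqVneq s a1; first by right; rewrite /xrot xglue_a1 rot_a1.
  by right; rewrite /xrot xglue_old // collapse_xnextc_lift.
- case: (ord3_cases k) => -> new; first by rewrite !inE eqxx orbT in new.
    by right; rewrite /xrot xglue_N0_1 collapse_xnextc_lift.
  by left; rewrite /xrot xglue_N0_2.
- case: (ord3_cases k) => -> new; first by rewrite !inE eqxx !orbT in new.
    by right; rewrite /xrot xglue_N1_1 collapse_xnextc_lift.
  by left; rewrite /xrot xglue_N1_2.
Qed.

Lemma lift_collapse y : y \notin new_corners ->
  lift (collapse y) = y \/ xrot y = lift (collapse y).
Proof.
case: y => [s|[k|k]].
- by rewrite !inE !(inj_eq inl_inj) /= orbF negb_or => /andP [? ?]; left; rewrite lift_old.
- case: (ord3_cases k) => -> new; first by rewrite !inE eqxx orbT in new.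
    by left; rewrite /= lift_b0.
  right; rewrite /xrot xglue_N0_2 /= lift_old //; first by rewrite eq_nextc_b0 eq_sym a0b0.
  exact: neq_sides_t0_t1.
- case: (ord3_cases k) => -> new; first by rewrite !inE eqxx !orbT in new.
    by left; rewrite /= -/b1 lift_b1.
  right; rewrite /xrot xglue_N1_2 /= lift_old //; last by rewrite eq_nextc_b1 eq_sym a1b1.
  by rewrite eq_sym; apply: neq_sides_t0_t1.
Qed.

Lemma xnextc_lift s : s != a0 -> s != a1 ->
  xnextc (lift s) = lift (nextc s) \/ xrot (xnextc (lift s)) = lift (nextc s).
Proof.
move=> s_a0 s_a1; rewrite [lift (nextc s)]lift_old ?eq_nextc_b0 ?eq_nextc_b1 //.
rewrite /lift; case: eqP => [->|_]; first by right; rewrite /= ordS_o1.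
by case: eqP => [->|_]; [right; rewrite /= ordS_o1 | left].
Qed.

Lemma xrot_lift s :
  xrot (lift s) = lift (rot s) \/ xrot (xrot (lift s)) = lift (rot s).
Proof.
have [->|s_a0] := eqVneq s a0.
  by left; rewrite lift_old ?a0b0 ?a0b1 // /xrot xglue_a0 /= ordS_o0 rot_a0 lift_b1.
have [->|s_a1] := eqVneq s a1.
  left; rewrite lift_old ?a1b1 // ?(eq_sym a1) ?b0a1 //.
  by rewrite /xrot xglue_a1 /= ordS_o0 rot_a1 lift_b0.
have [->|s_b0] := eqVneq s b0.
  by case/andP: glue_b0_neq => ? ?; rewrite lift_b0 /xrot xglue_N0_1; apply: xnextc_lift.
have [->|s_b1] := eqVneq s b1.
  by case/andP: glue_b1_neq => ? ?; rewrite lift_b1 /xrot xglue_N1_1; apply: xnextc_lift.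
by rewrite lift_old // /xrot xglue_old //; apply: xnextc_lift; rewrite ?eq_glue_a0 ?eq_glue_a1.
Qed.

Hypothesis connT : tri_connected T.

Lemma xside_ind (Q : pred xside) : Q (inl a0) ->
  (forall y, Q y -> Q (xnextc y)) -> (forall y, Q y -> Q (xglue y)) -> forall y, Q y.
Proof.
move=> Qa0 Qnext Qglue.
have Qtriangle (c : 'I_3 -> xside) : (forall k, xnextc (c k) = c (ordS k)) ->
    forall k k', Q (c k) -> Q (c k').
  move=> cS k k' Qk; have Q1 := Qnext _ Qk; have Q2 := Qnext _ Q1.
  rewrite !cS in Q1 Q2; move: Q1 Q2 Qk.
  by case: (ord3_cases k) => ->; rewrite ?(ordS_o0, ordS_o1, ordS_o2);
    case: (ord3_cases k') => -> //.
have QN0 k k' : Q (inr (inl k)) -> Q (inr (inl k')).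
  exact: (Qtriangle (fun k => inr (inl k))).
have QN1 k k' : Q (inr (inr k)) -> Q (inr (inr k')).
  exact: (Qtriangle (fun k => inr (inr k))).
have Qprev s : Q (inl (nextc s)) -> Q (inl s).
  by move=> Qs; rewrite -[s]nextc3_id; apply: Qnext (Qnext _ Qs).
have Qlift s : Q (lift s) -> Q (inl s).
  rewrite /lift; case: eqP => [-> /(QN0 _ o2)|_]; first by rewrite -xglue_N0_2; apply: Qglue.
  by case: eqP => [-> /(QN1 _ o2)|_] //; rewrite -xglue_N1_2; apply: Qglue.
have Qold_glue s : Q (inl s) -> Q (inl (glue s)).
  move=> /Qglue; have [->|s_a0] := eqVneq s a0.
    rewrite xglue_a0 => /(QN1 _ o2) /Qglue; rewrite xglue_N1_2; exact: Qprev.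
  have [->|s_a1] := eqVneq s a1.
    rewrite xglue_a1 glue_a1 => /(QN0 _ o2) /Qglue; rewrite xglue_N0_2; exact: Qprev.
  have [->|s_b0] := eqVneq s b0.
    by rewrite xglue_b0 => /(QN0 _ o1) /Qglue; rewrite xglue_N0_1; apply: Qlift.
  have [->|s_b1] := eqVneq s b1.
    by rewrite xglue_b1 => /(QN1 _ o1) /Qglue; rewrite xglue_N1_1; apply: Qlift.
  by rewrite xglue_old //; apply: Qlift.
have Qold s : Q (inl s).
  have /connectP [p a0p ->] := connT a0 s.
  elim: p a0 Qa0 a0p => [|s' p IHp] s0 Qs0 //= /andP [/orP adj_s0_s' s'p].
  by apply: IHp s'p; case: adj_s0_s' => /eqP ->; [apply: Qold_glue | apply: (Qnext (inl s0))].
case=> [s|[k|k]] //.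
- by apply: (QN0 o2); rewrite -xglue_b0; apply: Qglue.
- by apply: (QN1 o2); rewrite -xglue_b1; apply: Qglue.
Qed.

Definition encode y : 'I_(nt T).+2 * 'I_3 :=
  match y with
  | inl s => (widen_ord (leqW (leqnSn _)) s.1, s.2)
  | inr (inl k) => (Ordinal (leqnSn (nt T).+1), k)
  | inr (inr k) => (ord_max, k)
  end.

Definition decode (x : 'I_(nt T).+2 * 'I_3) : xside :=
  match (insub (val x.1) : option 'I_(nt T)) with
  | Some t => inl (t, x.2)
  | None => if val x.1 == nt T then inr (inl x.2) else inr (inr x.2)
  end.

Lemma encodeK : cancel encode decode.
Proof.
case=> [[t k]|[k|k]]; rewrite /decode /=.
- by rewrite (insubT (fun m => m < nt T) (ltn_ord t)) /=; congr (inl (_, _)); apply/val_inj.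
- by rewrite insubF ?ltnn // eqxx.
- by rewrite insubF ?(gtn_eqF (ltnSn _)) // ltnNge leqnSn.
Qed.

Lemma decodeK : cancel decode encode.
Proof.
case=> [i k]; rewrite /decode /=; case: insubP => [t _ Et|i_ge] /=.
  by congr (_, _); apply/val_inj; rewrite /= Et.
have := ltn_ord i; move: i_ge; rewrite -leqNgt => i_ge i_lt.
by case: eqP => [i_eq|i_neq]; congr (_, _); apply/val_inj => /=; lia.
Qed.

Lemma encode_inj : injective encode. Proof. exact: can_inj encodeK. Qed.

Definition add_puncture_glue x := encode (xglue (decode x)).

Lemma add_puncture_glue_invol : involutive add_puncture_glue.
Proof. by move=> x; rewrite /add_puncture_glue encodeK xglue_invol decodeK. Qed.

Lemma add_puncture_glue_nofix x : add_puncture_glue x != x.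
Proof.
by rewrite -{2}(decodeK x) (inj_eq encode_inj) xglue_nofix.
Qed.

Definition add_puncture := Triangulation add_puncture_glue_invol add_puncture_glue_nofix.
Implicit Types x : side add_puncture.

Lemma nextc_encode y : @nextc add_puncture (encode y) = encode (xnextc y).
Proof. by case: y => [[t k]|[k|k]]. Qed.

Lemma glue_encode y : @glue add_puncture (encode y) = encode (xglue y).
Proof. by rewrite /= /add_puncture_glue encodeK. Qed.

Lemma rot_encode y : @rot add_puncture (encode y) = encode (xrot y).
Proof. by rewrite /rot glue_encode nextc_encode. Qed.

Lemma add_puncture_connected : tri_connected add_puncture.
Proof.
pose adj (a b : side add_puncture) := (b == glue a) || (b == nextc a).
have next_adj y : adj (encode y) (encode (xnextc y)).
  by rewrite /adj nextc_encode eqxx orbT.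
have glue_adj y : adj (encode y) (encode (xglue y)) by rewrite /adj glue_encode eqxx.
pose z := encode (inl a0).
have from_z : forall y, connect adj z (encode y).
  apply: xside_ind => [|y zy|y zy]; first exact: connect0.
    exact: connect_trans zy (connect1 (next_adj y)).
  exact: connect_trans zy (connect1 (glue_adj y)).
have to_z : forall y, connect adj (encode y) z.
  apply: xside_ind => [|y yz|y yz]; first exact: connect0.
    apply: connect_trans (connect1 (next_adj _)) _.
    by apply: connect_trans (connect1 (next_adj _)) _; rewrite xnextc3_id.
  by apply: connect_trans (connect1 (glue_adj _)) _; rewrite xglue_invol.
by move=> x x'; rewrite -(decodeK x) -(decodeK x'); apply: connect_trans (to_z _) (from_z _).
Qed.

Definition new_puncture : seq (side add_puncture) := map encode new_corners.

Lemma new_puncture_cycle : fcycle (@rot add_puncture) new_puncture.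
Proof.
rewrite /new_puncture cycle_map; apply: sub_cycle new_corners_cycle => y _ /eqP <-.
by rewrite /= rot_encode.
Qed.

Lemma mem_new_puncture x : (x \in new_puncture) = (decode x \in new_corners).
Proof. by rewrite -{1}(decodeK x) (mem_map encode_inj). Qed.

Lemma new_puncture_uniq : uniq new_puncture.
Proof. by rewrite (map_inj_uniq encode_inj) new_corners_uniq. Qed.

Lemma deg_new_puncture x : decode x \in new_corners -> deg x = 4.
Proof.
rewrite -mem_new_puncture => x_new.
by rewrite /deg (order_cycle new_puncture_cycle new_puncture_uniq x_new).
Qed.

Definition old_sides : {pred side add_puncture} :=
  [predC fconnect (@rot add_puncture) (encode (inl b0))].

Lemma in_old_sides x : (x \in old_sides) = (decode x \notin new_corners).
Proof.
have b0_new : encode (inl b0) \in new_puncture.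
  by rewrite mem_new_puncture encodeK !inE eqxx.
rewrite inE /= -[x \in _]/(fconnect _ _ x) (fconnect_cycle new_puncture_cycle b0_new).
by rewrite mem_new_puncture.
Qed.

Definition elift s : side add_puncture := encode (lift s).

Lemma elift_old s : elift s \in old_sides.
Proof. by rewrite in_old_sides encodeK lift_notin_new_corners. Qed.

Lemma connect_elift_collapse x :
  x \in old_sides -> fconnect (@rot add_puncture) x (elift (collapse (decode x))).
Proof.
rewrite in_old_sides => x_old; rewrite -{1}(decodeK x) /elift.
case: (lift_collapse x_old) => [->|<-]; first exact: connect0.
by apply: connect1; rewrite /= rot_encode.
Qed.

Lemma old_sides_closed : closed (frel (@rot add_puncture)) old_sides.
Proof. exact/predC_closed/connect_closed/fconnect_sym/rot_inj. Qed.

Lemma elift_adjunction :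
  rel_adjunction elift (frel (@rot add_puncture)) (frel (@rot T)) old_sides.
Proof.
apply: (intro_adjunction (fconnect_sym (@rot_inj T)) old_sides_closed
  (fun x _ => collapse (decode x))).
- move=> x x_old; split; first exact: connect_elift_collapse.
  move=> x' _ /eqP <-; rewrite -{2}(decodeK x) rot_encode encodeK.
  move: x_old; rewrite in_old_sides => /collapse_xrot [->|->]; first exact: connect0.
  by apply: connect1; rewrite /= eqxx.
- move=> s _; split; first by rewrite /elift encodeK collapse_lift connect0.
  move=> s' /eqP <-; rewrite /elift.
  have rot_step y : fconnect (@rot add_puncture) (encode y) (encode (xrot y)).
    by apply: connect1; rewrite /= rot_encode.
  case: (xrot_lift s) => <-; first exact: rot_step.
  exact: connect_trans (rot_step _) (rot_step _).
Qed.

Lemma nverts_add_puncture : nverts add_puncture = (nverts T).+1.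
Proof.
have symT := fconnect_sym (@rot_inj T).
have symT' := fconnect_sym (@rot_inj add_puncture).
rewrite /nverts (n_compC (fconnect (@rot add_puncture) (encode (inl b0)))).
rewrite (n_comp_connect symT') add1n.
congr _.+1; rewrite (adjunction_n_comp elift symT' symT old_sides_closed elift_adjunction).
by apply: eq_n_comp_r => s; rewrite !inE; apply: elift_old.
Qed.

Lemma deg_old_side x :
  decode x \notin new_corners -> deg (collapse (decode x)) <= deg x.
Proof.
rewrite -in_old_sides => x_old; rewrite /deg /order.
pose ecollapse x' := collapse (decode x').
apply: leq_trans (leq_imset_card ecollapse (fconnect (@rot add_puncture) x)).
apply/subset_leq_card/subsetP => s s_orbit; apply/imsetP; exists (elift s).
  rewrite inE; apply: connect_trans (connect_elift_collapse x_old) _.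
  by rewrite -(rel_functor elift_adjunction) ?elift_old.
by rewrite /ecollapse /elift encodeK collapse_lift.
Qed.

Lemma deg_add_puncture x : deg x = 4 \/ deg (collapse (decode x)) <= deg x.
Proof.
have [x_new|x_old] := boolP (decode x \in new_corners).
  by left; apply: deg_new_puncture.
by right; apply: deg_old_side.
Qed.

Lemma collapse_decode_nextc x :
  collapse (decode (nextc x)) = nextc (collapse (decode x)).
Proof. by rewrite -{1}(decodeK x) nextc_encode encodeK collapse_xnextc. Qed.

Lemma add_puncture_genus g : tri_genus T g -> tri_genus add_puncture g.
Proof.
rewrite /tri_genus nverts_add_puncture.
have := twice_nedges T; have := twice_nedges add_puncture.
have : nt add_puncture = (nt T).+2 by [].
lia.
Qed.

End AddPuncture.

Section AddPunctureProperties.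
Variable T : triangulation.
Variable t0 : 'I_(nt T).
Hypothesis T3T : T3 T.
Local Notation T' := (add_puncture t0 T3T).

Lemma add_puncture_T3 : T3 T'.
Proof.
move=> x; case: (deg_add_puncture x) => [-> //|].
exact: leq_trans (T3T _).
Qed.

Lemma add_puncture_T4 : T4 T -> T4 T'.
Proof.
move=> T4T x; case: (deg_add_puncture x) => [-> //|].
exact: leq_trans (T4T _).
Qed.

Lemma add_puncture_T3half : T3half T -> T3half T'.
Proof.
case=> _ T3halfT; split=> [|x]; first exact: add_puncture_T3.
case: (deg_add_puncture x) => [-> | le_x]; first by left.
case: (deg_add_puncture (nextc x)) => [-> | le_nx]; first by right.
rewrite collapse_decode_nextc in le_nx.
case: (T3halfT (collapse t0 (decode x))) => [le4|le4]; [left | right].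
  exact: leq_trans le_x.
exact: leq_trans le_nx.
Qed.

End AddPunctureProperties.

Lemma has_triangulation_add_puncture (P : triangulation -> Prop) g n :
  (forall T, P T -> T3 T) ->
  (forall T (t0 : 'I_(nt T)) (T3T : T3 T), P T -> P (add_puncture t0 T3T)) ->
  0 < n -> has_triangulation g n P -> has_triangulation g n.+1 P.
Proof.
move=> P_T3 P_add n_gt0 [T [connT genusT nvertsT PT]].
have T3T := P_T3 T PT.
have nt_gt0 : 0 < nt T by apply: nt_gt0; rewrite nvertsT.
exists (add_puncture (Ordinal nt_gt0) T3T); split.
- exact: add_puncture_connected.
- exact: add_puncture_genus.
- by rewrite nverts_add_puncture nvertsT.
- exact: P_add.
Qed.

Theorem lemma5p2 (g n : nat) : 0 < n ->
  [/\ has_triangulation g n T3 -> has_triangulation g n.+1 T3,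
      has_triangulation g n T3half -> has_triangulation g n.+1 T3half &
      has_triangulation g n T4 -> has_triangulation g n.+1 T4].
Proof.
move=> n_gt0; split; apply: has_triangulation_add_puncture => //.
- by move=> T t0 T3T _; apply: add_puncture_T3.
- by move=> T [].
- by move=> T t0 T3T; apply: add_puncture_T3half.
- by move=> T T4T c; apply: ltnW.
- by move=> T t0 T3T; apply: add_puncture_T4.
Qed.
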